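(* Let $n,k,r$ be integers with $k,r\geq 2$ and $n\geq k+r$, and let $H$ be a vertex-$k$-maximal $r$-uniform hypergraph on $n$ vertices with a separation triple $(S,H_1,H_2)$, and let $n_i=|V(H_i)|$ for $i=1,2$. Then (i) every $r$-subset $e$ of $V(H)$ with $e\cap (V(H_1)\setminus S)\neq\emptyset$, $e\cap S\neq\emptyset$ and $e\cap (V(H_2)\setminus S)\neq\emptyset$ is an edge of $H$; and (ii) the number of edges of $H$ meeting each of $V(H_1)\setminus S$, $S$ and $V(H_2)\setminus S$ equals $$\binom{n}{r}-\binom{n_1}{r}-\binom{n_2}{r}+\binom{k}{r}-\binom{n-k}{r}+\binom{n_1-k}{r}+\binom{n_2-k}{r}.$$
   Context: Binomial coefficients satisfy $\binom{a}{b}=0$ when $b>a$. A hypergraph $H=(V,E)$ consists of a finite vertex set $V$ and a set $E$ of non-empty subsets of $V$ (edges). $H$ is $r$-uniform if every edge has exactly $r$ elements. The complement $H^c$ of an $r$-uniform hypergraph is the $r$-uniform hypergraph on the same vertex set whose edges are the $r$-subsets not in $E$. A subhypergraph of $H$ is $H'=(V',E')$ with $V'\subseteq V$, $E'\subseteq E$. For $e\in E(H^c)$, $H+e=(V,E\cup\{e\})$. For $Y\subseteq V$, $H[Y]$ is the induced hypergraph with vertex set $Y$ and edges $\{e\in E: e\subseteq Y\}$, and $H-Y=H[V\setminus Y]$. Connectedness and components are defined via paths (alternating sequences of distinct vertices and distinct edges, consecutive vertices lying in the intermediate edge). A vertex-cut is a set $X$ with $H-X$ disconnected. $\kappa(H)$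 is the minimum size of a vertex-cut if one exists, and $|V(H)|-1$ otherwise. $\overline{\kappa}(H)=\max\{\kappa(H'): H'\subseteq H\}$. $H$ is vertex-$k$-maximal if $\overline{\kappa}(H)\leq k$ but $\overline{\kappa}(H+e)\geq k+1$ for every $e\in E(H^c)$. For such $H$ with $|V(H)|\geq k+r$, a separation triple $(S,H_1,H_2)$ is obtained by taking a minimum vertex-cut $S$ (of size $k$), a component $C_1$ of $H-S$, letting $C_2=H-(S\cup V(C_1))$, $H_1=H[S\cup V(C_1)]$ and $H_2=H[S\cup V(C_2)]$. *)

From HB Require Import structures.
From mathcomp Require Import all_boot all_order all_algebra.
From Stdlib Require Import ClassicalEpsilon.
Set Implicit Arguments. Unset Strict Implicit. Unset Printing Implicit Defensive.

Notation hgraph T := ({set T} * {set {set T}})%type.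

Definition pb (P : Prop) : bool :=
  if excluded_middle_informative P then true else false.

Section Hyp.
Variable T : finType.

Definition is_hypergraph (H : hgraph T) : Prop :=
  forall e, e \in H.2 -> e \subset H.1 /\ e != set0.

Definition is_path (H : hgraph T) (x y : T) : Prop :=
  exists (vs : seq T) (es : seq {set T}),
    [/\ uniq vs, uniq es, size vs = (size es).+1,
        all (fun v => v \in H.1) vs & all (fun e => e \in H.2) es] /\
    [/\ head x vs = x, last x vs = y &
        forall i, i < size es ->
          (nth x vs i \in nth set0 es i) && (nth x vs i.+1 \in nth set0 es i)].

Definition connected (H : hgraph T) : Prop :=
  forall x y, x \in H.1 -> y \in H.1 -> is_path H x y.

Definition induced (H : hgraph T) (Y : {set T}) : hgraph T :=
  (Y, [set e in H.2 | e \subset Y]).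
Definition hdel (H : hgraph T) (Y : {set T}) : hgraph T :=
  induced H (H.1 :\: Y).

Definition is_cut (H : hgraph T) (X : {set T}) : Prop :=
  X \subset H.1 /\ ~ connected (hdel H X).

Definition is_min_cut (H : hgraph T) (X : {set T}) : Prop :=
  is_cut H X /\ forall Y, is_cut H Y -> #|X| <= #|Y|.

Definition is_component (H : hgraph T) (C : {set T}) : Prop :=
  C \subset H.1 /\ exists2 x, x \in C &
    forall y, y \in C <-> (y \in H.1 /\ is_path H x y).

Definition kappa (H : hgraph T) : nat :=
  if pb (exists X, is_cut H X)
  then \big[minn/#|H.1|]_(X : {set T} | pb (is_cut H X)) #|X|
  else #|H.1|.-1.

Definition subhyp (H' H : hgraph T) : Prop :=
  [/\ H'.1 \subset H.1, H'.2 \subset H.2 & is_hypergraph H'].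

Definition kappa_bar (H : hgraph T) : nat :=
  \max_(H' : hgraph T | pb (subhyp H' H)) kappa H'.

Definition add_edge (H : hgraph T) (e : {set T}) : hgraph T := (H.1, e |: H.2).

Definition compl_edge (r : nat) (H : hgraph T) (e : {set T}) : Prop :=
  [/\ e \subset H.1, #|e| = r & e \notin H.2].

Definition vertex_k_maximal (k r : nat) (H : hgraph T) : Prop :=
  kappa_bar H <= k /\
  forall e, compl_edge r H e -> k.+1 <= kappa_bar (add_edge H e).

(* (S, H1, H2) is a separation triple: S minimum vertex-cut of size k,
   C1 (vertex set of) a component of H - S; then
   V(H1) = S :|: C1, V(H2) = S :|: (V :\: (S :|: C1)). *)
Definition separation (k : nat) (H : hgraph T) (S C1 : {set T}) : Prop :=
  [/\ is_min_cut H S, #|S| = k & is_component (hdel H S) C1].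

Definition meets (e A : {set T}) : bool := e :&: A != set0.

End Hyp.

(* (i) If a crossing r-set e were missing, then in every subhypergraph H' of
   H + e that contains e (the others are subhypergraphs of H) the set S still
   separates the vertices of e in C1 from those in C2: an edge of H' - S
   cannot be e, which meets S, so it is an edge of H - S and cannot leave the
   component C1.  Hence kappa(H') <= |S| = k, so kappa_bar(H + e) <= k,
   against maximality.
   (ii) By (i) the edges meeting C1, S and C2 are all the r-subsets of V that
   do so; their number follows by inclusion-exclusion over the r-subsets of V
   missing C1, S or C2. *)
From HB Require Import structures.
From mathcomp Require Import all_boot all_order all_algebra.
From mathcomp Require Import zify.
From Stdlib Require Import ClassicalEpsilon.
Import Order.TTheory.

Set Implicit Arguments. Unset Strict Implicit. Unset Printing Implicit Defensive.

Lemma pbP (P : Prop) : pb P <-> P.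
Proof. by rewrite /pb; case: excluded_middle_informative. Qed.

Section Paths.
Variable T : finType.
Implicit Types (G : hgraph T) (C : {set T}) (f : {set T}) (x y z : T).

Definition hpath G x y (vs : seq T) (es : seq {set T}) : Prop :=
  [/\ uniq vs, uniq es, size vs = (size es).+1,
      all (fun v => v \in G.1) vs & all (fun e => e \in G.2) es] /\
  [/\ head x vs = x, last x vs = y &
      forall i, i < size es ->
        (nth x vs i \in nth set0 es i) && (nth x vs i.+1 \in nth set0 es i)].

Lemma hpath_take G x y vs es i : hpath G x y vs es -> i < size vs ->
  hpath G x (nth x vs i) (take i.+1 vs) (take i es).
Proof.
move=> [[uvs ues sz inV inE] [hd _ steps]] ltivs.
have leies : i <= size es by rewrite -ltnS -sz.
split; split.
- exact: take_uniq.
- exact: take_uniq.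
- by rewrite !size_takel.
- by apply/allP => v /mem_take; apply: (allP inV).
- by apply/allP => e /mem_take; apply: (allP inE).
- by case: vs sz hd {uvs inV steps ltivs}.
- by rewrite -nth_last size_takel //= nth_take.
- move=> j; rewrite size_takel // => ltji.
  rewrite !nth_take //; last by rewrite ltnS ltnW.
  exact: steps (leq_trans ltji leies).
Qed.

Lemma hpath_rcons G x y vs es z f : hpath G x y vs es ->
  z \notin vs -> f \notin es -> f \in G.2 -> z \in G.1 -> y \in f -> z \in f ->
  hpath G x z (rcons vs z) (rcons es f).
Proof.
move=> [[uvs ues sz inV inE] [hd lt steps]] zvs fes fG zG yf zf.
split; split.
- by rewrite rcons_uniq zvs.
- by rewrite rcons_uniq fes.
- by rewrite !size_rcons sz.
- by rewrite all_rcons zG.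
- by rewrite all_rcons fG.
- by case: vs sz hd {uvs inV steps zvs lt}.
- by rewrite last_rcons.
- move=> i; rewrite size_rcons ltnS leq_eqVlt => /orP [/eqP ->|lties].
    have lastvs : nth x vs (size es) = y by rewrite -lt -nth_last sz.
    by rewrite !nth_rcons sz ltnSn !ltnn !eqxx /= lastvs yf zf.
  have ltiSes : i < (size es).+1 by apply: ltnW.
  by rewrite !nth_rcons sz lties (ltnS i.+1) lties ltiSes; apply: steps.
Qed.

(* The walk through f is shortcut at the first repeated vertex or edge, so
   that the new path stays simple. *)
Lemma is_path_extend G x y z f : is_path G x y -> f \in G.2 ->
  y \in f -> z \in f -> z \in G.1 -> is_path G x z.
Proof.
move=> [vs [es P]] fG yf zf zG.
have [[_ ues sz _ _] [_ _ steps]] := P.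
case: (boolP (z \in vs)) => zvs.
  exists (take (index z vs).+1 vs), (take (index z vs) es).
  by have := hpath_take P (etrans (index_mem z vs) zvs); rewrite nth_index.
case: (boolP (f \in es)) => fes; last first.
  by exists (rcons vs z), (rcons es f); exact: hpath_rcons P zvs fes fG zG yf zf.
set j := index f es.
have ltjes : j < size es by rewrite index_mem.
exists (rcons (take j.+1 vs) z), (rcons (take j es) f).
apply: hpath_rcons (hpath_take P _) _ _ fG zG _ zf.
- by rewrite sz ltnW.
- by apply: contra zvs => /mem_take.
- have := take_uniq j.+1 ues; rewrite (take_nth set0 ltjes) rcons_uniq nth_index //.
  by case/andP.
- by have := steps j ltjes; rewrite nth_index // => /andP [].
Qed.

Lemma hpath_closed G C x y vs es :
  (forall f u v, f \in G.2 -> u \in f -> v \in f -> u \in C -> v \in C) ->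
  x \in C -> hpath G x y vs es -> y \in C.
Proof.
move=> closedC xC [[_ _ sz _ inE] [hd <- steps]].
rewrite -nth_last sz /=.
suff: forall i, i <= size es -> nth x vs i \in C by apply.
elim=> [|i IHi] leies; first by rewrite nth0 hd.
have /andP [vif viSf] := steps i leies.
exact: closedC (allP inE _ (mem_nth set0 leies)) vif viSf (IHi (ltnW leies)).
Qed.

Lemma component_edge_closed G C f u v : is_component G C ->
  f \in G.2 -> f \subset G.1 -> u \in f -> v \in f -> u \in C -> v \in C.
Proof.
move=> [_ [x _ memC]] fG fV uf vf /memC [_ pathxu].
apply/memC; split; first exact: subsetP fV v vf.
exact: is_path_extend pathxu fG uf vf (subsetP fV v vf).
Qed.

End Paths.

Section Connectivity.
Variable T : finType.
Implicit Types (H : hgraph T) (V S e : {set T}) (E : {set {set T}}).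

Lemma kappa_le_cut H X : is_cut H X -> kappa H <= #|X|.
Proof.
move=> cutX; rewrite /kappa.
have /pbP -> : exists X, is_cut H X by exists X.
rewrite -minEnat; apply: (bigmin_le_cond (T := nat)); exact/pbP.
Qed.

Lemma kappa_le_kappa_bar H' H : subhyp H' H -> kappa H' <= kappa_bar H.
Proof.
by move=> subH'; apply: (@leq_bigmax_cond _ _ (fun G => kappa G) H'); apply/pbP.
Qed.

Lemma add_edge_cut V E S C1 e V' E' :
  subhyp (V', E') (add_edge (V, E) e) -> e \in E' ->
  is_component (hdel (V, E) S) C1 ->
  meets e C1 -> meets e S -> meets e (V :\: (S :|: C1)) ->
  is_cut (V', E') (S :&: V').
Proof.
move=> [/= sV' sE' hypH'] eE' compC1 mC1 mS mC2.
have eV' : e \subset V' by have [] := hypH' e eE'.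
have [s] := set0Pn _ mS; rewrite inE => /andP [se sS].
have [a] := set0Pn _ mC1; rewrite inE => /andP [ae aC1].
have [b] := set0Pn _ mC2.
rewrite !inE negb_or => /andP [be /andP [/andP [bS bC1] _]].
have aS : a \notin S.
  by have [/subsetP/(_ a aC1)] := compC1; rewrite inE => /andP [].
have inH'S v : v \in e -> v \notin S -> v \in (hdel (V', E') (S :&: V')).1.
  by move=> ve vS; rewrite !inE (negbTE vS) (subsetP eV' v ve).
split=> [|connH'S]; first exact: subsetIr.
have [vs [es Pab]] := connH'S a b (inH'S a ae aS) (inH'S b be bS).
suff : b \in C1 by rewrite (negbTE bC1).
apply: hpath_closed aC1 Pab => f u v /=; rewrite inE => /andP [fE' fV'S] uf vf.
have fVS : f \subset V :\: S.
  apply/subsetP => w /(subsetP fV'S); rewrite !inE => /andP [wSV' wV'].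
  by move: wSV'; rewrite wV' andbT => ->; rewrite (subsetP sV').
have fE : f \in E.
  have := subsetP sE' f fE'; rewrite in_setU1 => /orP [/eqP fe|//].
  by have := subsetP fVS s; rewrite fe se !inE sS => /(_ isT).
have fHS : f \in (hdel (V, E) S).2 by rewrite inE fE fVS.
exact: component_edge_closed compC1 fHS fVS uf vf.
Qed.

Lemma vertex_k_maximal_crossing_edge k r V E S C1 e :
  vertex_k_maximal k r (V, E) -> #|S| <= k ->
  is_component (hdel (V, E) S) C1 -> e \subset V -> #|e| = r ->
  meets e C1 -> meets e S -> meets e (V :\: (S :|: C1)) -> e \in E.
Proof.
move=> [kbarH maxH] cardS compC1 eV cardE mC1 mS mC2.
apply: contraT => eE.
suff : kappa_bar (add_edge (V, E) e) <= k by rewrite leqNgt maxH.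
apply/bigmax_leqP => -[V' E'] /pbP subH'.
case: (boolP (e \in E')) => eE'.
  apply: leq_trans (kappa_le_cut (add_edge_cut subH' eE' compC1 mC1 mS mC2)) _.
  by apply: leq_trans cardS; rewrite subset_leq_card // subsetIl.
apply: leq_trans kbarH; apply: kappa_le_kappa_bar.
have [/= sV' sE' hypH'] := subH'; split=> //=; apply/subsetP => f fE'.
have := subsetP sE' f fE'; rewrite in_setU1 => /orP [/eqP fe|//].
by move: eE'; rewrite -fe fE'.
Qed.

End Connectivity.

Section Counting.
Variables (T : finType) (r : nat).
Implicit Types (A B C X Y Z e : {set T}).

Definition rsubsets A := [set e : {set T} | e \subset A & #|e| == r].

Lemma card_rsubsets A : #|rsubsets A| = 'C(#|A|, r).
Proof. exact: cards_draws. Qed.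

Lemma rsubsetsI A B : rsubsets A :&: rsubsets B = rsubsets (A :&: B).
Proof. by apply/setP => e; rewrite !inE subsetI andbACA andbb. Qed.

Lemma rsubsetsS A B : A \subset B -> rsubsets A \subset rsubsets B.
Proof.
move=> AB; apply/subsetP => e; rewrite !inE => /andP [eA ->].
by rewrite (subset_trans eA AB).
Qed.

Lemma cardsU_disjoint A B : [disjoint A & B] -> #|A :|: B| = #|A| + #|B|.
Proof. by move=> AB; rewrite cardsU disjoint_setI0 // cards0 subn0. Qed.

Lemma setUI_disjoint A B C : [disjoint A & B] -> (A :|: C) :&: (B :|: C) = C.
Proof. by move=> AB; rewrite -setUIl disjoint_setI0 // set0U. Qed.

Lemma disjointsU A B C :
  [disjoint A & B :|: C] = [disjoint A & B] && [disjoint A & C].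
Proof. by rewrite -!setI_eq0 setIUr setU_eq0. Qed.

Lemma meetsNE e A B : e \subset A :|: B -> [disjoint A & B] ->
  ~~ meets e A = (e \subset B).
Proof.
move=> eAB AB; have BA : [disjoint B & A] by rewrite disjoint_sym.
rewrite /meets negbK setI_eq0.
apply/idP/idP => [eA|eB]; last exact: disjointWl eB BA.
have : e \subset (A :|: B) :\: A by rewrite subsetD eAB.
by rewrite setDUl setDv set0U (setDidPl BA).
Qed.

(* The r-subsets missing two of the parts are the r-subsets of the third. *)
Lemma card_rsubsets_meeting3 X Y Z : 0 < r ->
  [disjoint X & Y] -> [disjoint Y & Z] -> [disjoint X & Z] ->
  #|[set e in rsubsets (X :|: Y :|: Z) | [&& meets e X, meets e Y & meets e Z]]|
    + 'C(#|X| + #|Y|, r) + 'C(#|Y| + #|Z|, r) + 'C(#|X| + #|Z|, r)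
  = 'C(#|X| + #|Y| + #|Z|, r) + 'C(#|X|, r) + 'C(#|Y|, r) + 'C(#|Z|, r).
Proof.
move=> r_gt0 XY YZ XZ.
have YX : [disjoint Y & X] by rewrite disjoint_sym.
have ZY : [disjoint Z & Y] by rewrite disjoint_sym.
have ZX : [disjoint Z & X] by rewrite disjoint_sym.
set W := X :|: Y :|: Z.
set missX := rsubsets (Y :|: Z); set missY := rsubsets (X :|: Z).
set missZ := rsubsets (X :|: Y); set miss := missX :|: missY :|: missZ.
have meeting3E : [set e in rsubsets W | [&& meets e X, meets e Y & meets e Z]]
    = rsubsets W :\: miss.
  apply/setP => e; rewrite !inE; case eW: (e \subset W); rewrite /= ?andbF //.
  have eX : e \subset X :|: (Y :|: Z) by rewrite setUA.
  have eY : e \subset Y :|: (X :|: Z) by rewrite setUCA setUA.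
  have eZ : e \subset Z :|: (X :|: Y) by rewrite setUC.
  rewrite -(meetsNE eX) ?disjointsU ?XY ?XZ // -(meetsNE eY) ?disjointsU ?YX ?YZ //.
  rewrite -(meetsNE eZ) ?disjointsU ?ZX ?ZY //.
  by case: (#|e| == r); case: (meets e X); case: (meets e Y); case: (meets e Z).
have missW : miss \subset rsubsets W.
  rewrite !subUset -andbA; apply/and3P; split; apply: rsubsetsS;
    by apply/subsetP => v; rewrite !inE => /orP [] ->; rewrite ?orbT.
have cardW := cardsID miss (rsubsets W).
rewrite (setIidPr missW) -meeting3E in cardW.
have cardXYZ := cardsUI (missX :|: missY) missZ.
rewrite setIUl !rsubsetsI (setUC Y Z) (setUI_disjoint _ ZX) in cardXYZ.
rewrite (setUC X Z) (setUC X Y) (setUI_disjoint _ ZY) in cardXYZ.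
have cardXY := cardsUI missX missY; rewrite rsubsetsI setUI_disjoint // in cardXY.
have cardX_Y := cardsUI (rsubsets Y) (rsubsets X).
rewrite rsubsetsI disjoint_setI0 // in cardX_Y.
move: cardW cardXYZ cardXY cardX_Y.
rewrite /miss !card_rsubsets cards0 bin0n eqn0Ngt r_gt0 /=.
rewrite /W !cardsU_disjoint -?setI_eq0 ?setIUl ?setU_eq0 ?setI_eq0 ?XY ?XZ ?YZ //.
lia.
Qed.
End Counting.

Lemma separation_partition (T : finType) (V S C : {set T}) :
  S \subset V -> C \subset V :\: S ->
  [/\ [disjoint C & S], [disjoint S & V :\: (S :|: C)],
      [disjoint C & V :\: (S :|: C)] & C :|: S :|: V :\: (S :|: C) = V].
Proof.
move=> SV; rewrite subsetD => /andP [CV CS].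
have SCV : S :|: C \subset V by rewrite subUset SV CV.
have SC_rest : [disjoint S :|: C & V :\: (S :|: C)].
  by rewrite -setI_eq0 setDE setICA setICr setI0.
split=> //.
- exact: disjointWl (subsetUl _ _) SC_rest.
- exact: disjointWl (subsetUr _ _) SC_rest.
- by rewrite (setUC C S) -{2}(setID V (S :|: C)) (setIidPr SCV).
Qed.

Theorem lemma2p3 (T : finType) (n k r : nat)
  (V : {set T}) (E : {set {set T}}) (S C1 : {set T}) :
  2 <= k -> 2 <= r -> k + r <= n ->
  #|V| = n ->
  (forall e, e \in E -> e \subset V /\ #|e| = r) ->
  vertex_k_maximal k r (V, E) ->
  separation k (V, E) S C1 ->
  let C2 := V :\: (S :|: C1) in
  let n1 := #|S :|: C1| in
  let n2 := #|S :|: C2| in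
  (forall e : {set T}, e \subset V -> #|e| = r ->
     meets e C1 -> meets e S -> meets e C2 -> e \in E) /\
  (Posz #|[set e in E | [&& meets e C1, meets e S & meets e C2]]| =
     (Posz 'C(n, r) - Posz 'C(n1, r) - Posz 'C(n2, r) + Posz 'C(k, r)
      - Posz 'C(n - k, r) + Posz 'C(n1 - k, r) + Posz 'C(n2 - k, r))%R).
Proof.
move=> _ r_ge2 _ cardV edgesH maxH [[[SV _] _] cardS compC1] C2 n1 n2.
have crossing (e : {set T}) : e \subset V -> #|e| = r ->
    meets e C1 -> meets e S -> meets e C2 -> e \in E.
  exact: vertex_k_maximal_crossing_edge maxH (eq_leq cardS) compC1.
split=> //; have [C1V _] := compC1.
have [C1S SC2 C1C2 partV] := @separation_partition _ V S C1 SV C1V.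
have -> : [set e in E | [&& meets e C1, meets e S & meets e C2]]
    = [set e in rsubsets r (C1 :|: S :|: C2)
         | [&& meets e C1, meets e S & meets e C2]].
  apply/setP => e; rewrite partV !inE; case eE: (e \in E) => /=.
    by have [-> ->] := edgesH e eE; rewrite eqxx.
  apply/esym/andP => -[/andP [eV /eqP cardE] /and3P [mC1 mS mC2]].
  by move: eE; rewrite (crossing e eV cardE mC1 mS mC2).
have := card_rsubsets_meeting3 (ltnW r_ge2) C1S SC2 C1C2.
have n1E : n1 = #|C1| + k by rewrite /n1 setUC cardsU_disjoint // cardS.
have n2E : n2 = k + #|C2| by rewrite /n2 cardsU_disjoint // cardS.
have nE : n = #|C1| + k + #|C2|.
  rewrite -cardV -partV !cardsU_disjoint ?cardS //.
  by rewrite -setI_eq0 setIUl setU_eq0 !setI_eq0 C1C2 SC2.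
have -> : n - k = #|C1| + #|C2| by rewrite nE; lia.
rewrite n1E n2E nE addnK addKn cardS -/C2 => count3.
set m := #|[set e in _ | _]| in count3 *.
lia.
Qed.
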